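(* Let $d\ge1$ and $s\in(-\tfrac12,\infty)$. Define $S_s:\mathbb{R}^{d\times d}\to\mathbb{R}^{d\times d}$ by $S_s(\mathbf A):=\mathbf U\mathbf H^{2s+1}\mathbf V^T$, where $\mathbf A=\mathbf U\mathbf H\mathbf V^T$ is a singular value decomposition ($\mathbf U,\mathbf V$ orthogonal, $\mathbf H$ diagonal with the nonnegative singular values $\sigma_1,\dots,\sigma_d$ of $\mathbf A$, and $\mathbf H^{2s+1}=\operatorname{diag}(\sigma_j^{2s+1})$); equivalently $S_s(\mathbf A)=(\mathbf A\mathbf A^T)^s\mathbf A$ whenever the latter is defined. Then for all $\mathbf A,\mathbf C\in\mathbb{R}^{d\times d}$, \[ (S_s(\mathbf A)-S_s(\mathbf C)):(\mathbf A-\mathbf C)\ge0. \]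
   Context: '':'' denotes the Frobenius inner product $\mathbf X:\mathbf Y=\sum_{i,j}X_{ij}Y_{ij}$. $S_s(\mathbf A)$ does not depend on the choice of singular value decomposition. *)

From HB Require Import structures.
From mathcomp Require Import all_boot all_order all_algebra.
From mathcomp Require Import reals exp.
Set Implicit Arguments. Unset Strict Implicit. Unset Printing Implicit Defensive.
Import Order.TTheory GRing.Theory Num.Theory.
Local Open Scope ring_scope.

Definition orthomx (R : realType) (d : nat) (U : 'M[R]_d) : Prop :=
  U *m U^T = 1%:M.

Definition is_svd (R : realType) (d : nat) (A U V : 'M[R]_d) (h : 'rV[R]_d) : Prop :=
  [/\ orthomx U, orthomx V, (forall j, 0 <= h 0 j) & A = U *m diag_mx h *m V^T].

Definition S_svd (R : realType) (d : nat) (s : R) (U V : 'M[R]_d) (h : 'rV[R]_d)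
  : 'M[R]_d :=
  U *m diag_mx (\row_j (powR (h 0 j) (2 * s + 1))) *m V^T.

Definition frob (R : realType) (d : nat) (X Y : 'M[R]_d) : R :=
  \sum_(i < d) \sum_(j < d) X i j * Y i j.

From Pilot Require Import Defs.
From HB Require Import structures.
From mathcomp Require Import all_boot all_order all_algebra.
From mathcomp Require Import reals exp.
From mathcomp Require Import ring lra.
Import Order.TTheory GRing.Theory Num.Theory.
Local Open Scope ring_scope.
Set Implicit Arguments.
Unset Strict Implicit.

(* Write A = U diag(a) V^T and C = W diag(c) Z^T, and let f(t) = t^(2s+1),
   a nonnegative nondecreasing function on [0, oo).  With P = U^T W and
   Q = V^T Z the Frobenius products expand into double sums over (k, l) whose
   cross terms carry the weight P_kl Q_kl.  Since P and Q are orthogonal, the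
   matrix M_kl = (P_kl^2 + Q_kl^2)/2 is doubly stochastic, so the diagonal
   terms sum_k f(a_k) a_k and sum_l f(c_l) c_l can be spread over all (k, l)
   with weights M_kl.  Each resulting (k, l) term is then nonnegative because
   P_kl Q_kl <= M_kl and (f(x) - f(y))(x - y) >= 0. *)

Section Frobenius.
Variables (R : realType) (d : nat).
Implicit Types (X Y Z W U V : 'M[R]_d) (f g : 'rV[R]_d).

Lemma frobC X Y : frob X Y = frob Y X.
Proof. by apply: eq_bigr => i _; apply: eq_bigr => j _; rewrite mulrC. Qed.

Lemma frobB X Y Z W :
  frob (X - Y) (Z - W) = frob X Z - frob X W - frob Y Z + frob Y W.
Proof.
rewrite /frob -!sumrB -big_split /=; apply: eq_bigr => i _.
rewrite -!sumrB -big_split /=; apply: eq_bigr => j _.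
by rewrite !mxE; ring.
Qed.

Lemma mul_diag_mx_trE U V f i j :
  (U *m diag_mx f *m V^T) i j = \sum_k U i k * f 0 k * V j k.
Proof. by rewrite mul_mx_diag !mxE; apply: eq_bigr => k _; rewrite !mxE. Qed.

Lemma frob_diag_mx U V W Z f g :
  frob (U *m diag_mx f *m V^T) (W *m diag_mx g *m Z^T) =
  \sum_k \sum_l f 0 k * g 0 l * (U^T *m W) k l * (V^T *m Z) k l.
Proof.
rewrite /frob.
transitivity (\sum_i \sum_j \sum_k \sum_l
    (U i k * f 0 k * V j k) * (W i l * g 0 l * Z j l)).
  apply: eq_bigr => i _; apply: eq_bigr => j _.
  rewrite !mul_diag_mx_trE big_distrl; apply: eq_bigr => k _.
  by rewrite big_distrr.
transitivity (\sum_k \sum_l \sum_i \sum_j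
    (U i k * f 0 k * V j k) * (W i l * g 0 l * Z j l)).
  transitivity (\sum_i \sum_k \sum_l \sum_j
      (U i k * f 0 k * V j k) * (W i l * g 0 l * Z j l)).
    apply: eq_bigr => i _; rewrite exchange_big; apply: eq_bigr => k _.
    by rewrite exchange_big.
  by rewrite exchange_big; apply: eq_bigr => k _; rewrite exchange_big.
apply: eq_bigr => k _; apply: eq_bigr => l _.
rewrite !mxE -mulrA big_distrl big_distrr /=; apply: eq_bigr => i _.
rewrite !big_distrr /=; apply: eq_bigr => j _.
by rewrite !mxE; ring.
Qed.

(* Unqualified [orthomx] would denote the sesquilinear one of MathComp. *)
Lemma orthomx_trC U : Defs.orthomx U -> U^T *m U = 1%:M.
Proof. exact: mulmx1C. Qed.

Lemma orthomx_tr U : Defs.orthomx U -> Defs.orthomx U^T.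
Proof. by move=> oU; rewrite /Defs.orthomx trmxK orthomx_trC. Qed.

Lemma orthomx_trmul U W :
  Defs.orthomx U -> Defs.orthomx W -> Defs.orthomx (U^T *m W).
Proof.
move=> oU oW; rewrite /Defs.orthomx trmx_mul trmxK mulmxA -(mulmxA _ W) oW.
by rewrite mulmx1 orthomx_trC.
Qed.

Lemma orthomx_row_sqr U k : Defs.orthomx U -> \sum_l U k l ^+ 2 = 1.
Proof.
move=> oU; have := congr1 (fun M : 'M[R]_d => M k k) oU.
rewrite !mxE eqxx mulr1n => <-.
by apply: eq_bigr => l _; rewrite !mxE expr2.
Qed.

Lemma orthomx_col_sqr U l : Defs.orthomx U -> \sum_k U k l ^+ 2 = 1.
Proof.
move/orthomx_tr/(orthomx_row_sqr l) => <-.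
by apply: eq_bigr => k _; rewrite mxE.
Qed.

Lemma frob_diag_mx_same U V f g : Defs.orthomx U -> Defs.orthomx V ->
  frob (U *m diag_mx f *m V^T) (U *m diag_mx g *m V^T) = \sum_k f 0 k * g 0 k.
Proof.
move=> oU oV; rewrite frob_diag_mx !orthomx_trC //; apply: eq_bigr => k _.
rewrite (bigD1 k) //= !mxE eqxx !mulr1 big1 ?addr0 // => l lk.
by rewrite !mxE eq_sym (negbTE lk) mulr0.
Qed.

End Frobenius.

Lemma sum_row_stochastic (R : realType) (d : nat) (M : 'I_d -> 'I_d -> R)
    (x : 'I_d -> R) :
  (forall k, \sum_l M k l = 1) -> \sum_k \sum_l M k l * x k = \sum_k x k.
Proof.
by move=> M1; apply: eq_bigr => k _; rewrite -big_distrl /= M1 mul1r.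
Qed.

Lemma monotone_weighted_term_ge0 (R : realType) (x y fx fy P Q : R) :
  0 <= x -> 0 <= y -> 0 <= fx -> 0 <= fy -> 0 <= (fx - fy) * (x - y) ->
  0 <= (P ^+ 2 + Q ^+ 2) / 2 * (fx * x) - fx * y * P * Q - x * fy * P * Q
       + (P ^+ 2 + Q ^+ 2) / 2 * (fy * y).
Proof.
move=> x0 y0 fx0 fy0 mono.
have -> : (P ^+ 2 + Q ^+ 2) / 2 * (fx * x) - fx * y * P * Q - x * fy * P * Q
       + (P ^+ 2 + Q ^+ 2) / 2 * (fy * y) =
   (P ^+ 2 + Q ^+ 2) / 2 * ((fx - fy) * (x - y))
   + (fx * y + x * fy) * ((P - Q) ^+ 2 / 2) by field.
have sqr_half_ge0 (t : R) : 0 <= t ^+ 2 / 2 by rewrite divr_ge0 ?sqr_ge0.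
apply: addr_ge0; apply: mulr_ge0 => //.
- by rewrite mulrDl addr_ge0 ?sqr_half_ge0.
- by rewrite addr_ge0 ?mulr_ge0.
Qed.

Lemma nondecreasing_mul_subr_ge0 (R : realType) (f : R -> R) x y :
  (forall u v, 0 <= u -> u <= v -> f u <= f v) -> 0 <= x -> 0 <= y ->
  0 <= (f x - f y) * (x - y).
Proof.
move=> fmono x0 y0; have [xy|yx] := lerP x y.
  by rewrite -mulrNN mulr_ge0 // oppr_ge0 subr_le0 // fmono.
by rewrite mulr_ge0 // subr_ge0 // ?fmono // ltW.
Qed.

Lemma frob_svd_monotone_ge0 (R : realType) (d : nat) (f : R -> R)
    (U V W Z : 'M[R]_d) (a c : 'rV[R]_d) :
  (forall x, 0 <= x -> 0 <= f x) ->
  (forall x y, 0 <= x -> x <= y -> f x <= f y) ->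
  Defs.orthomx U -> Defs.orthomx V -> Defs.orthomx W -> Defs.orthomx Z ->
  (forall k, 0 <= a 0 k) -> (forall l, 0 <= c 0 l) ->
  0 <= frob (U *m diag_mx (\row_k f (a 0 k)) *m V^T
             - W *m diag_mx (\row_l f (c 0 l)) *m Z^T)
            (U *m diag_mx a *m V^T - W *m diag_mx c *m Z^T).
Proof.
move=> f0 fmono oU oV oW oZ a0 c0.
set P := U^T *m W; set Q := V^T *m Z.
pose M k l := (P k l ^+ 2 + Q k l ^+ 2) / 2.
have oP : Defs.orthomx P by apply: orthomx_trmul.
have oQ : Defs.orthomx Q by apply: orthomx_trmul.
have Mrow k : \sum_l M k l = 1.
  by rewrite -big_distrl big_split /= !orthomx_row_sqr //; field.
have Mcol l : \sum_k M k l = 1.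
  by rewrite -big_distrl big_split /= !orthomx_col_sqr //; field.
rewrite frobB [frob (W *m _ *m _) _]frobC !frob_diag_mx_same // !frob_diag_mx.
rewrite -/P -/Q -(sum_row_stochastic (fun k => _ * _) Mrow).
rewrite -(sum_row_stochastic (fun l => _ * _) Mcol) [in X in _ + X]exchange_big.
rewrite -!sumrB -big_split /=; apply: sumr_ge0 => k _.
rewrite -!sumrB -big_split /=; apply: sumr_ge0 => l _.
rewrite [(\row__ _) 0 k]mxE [(\row__ _) 0 l]mxE.
apply: monotone_weighted_term_ge0; rewrite ?f0 //.
exact: nondecreasing_mul_subr_ge0.
Qed.

Theorem mainTheorem4 (R : realType) (d : nat) (s : R)
  (hd : (1 <= d)%N) (hs : - 2^-1 < s)
  (A C UA VA UC VC : 'M[R]_d) (hA hC : 'rV[R]_d) :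
  is_svd A UA VA hA -> is_svd C UC VC hC ->
  0 <= frob (S_svd s UA VA hA - S_svd s UC VC hC) (A - C).
Proof.
move=> [oUA oVA hA0 ->] [oUC oVC hC0 ->].
have p0 : 0 <= 2 * s + 1 by lra.
have pow_ge0 (x : R) : 0 <= x -> 0 <= x `^ (2 * s + 1).
  by move=> _; apply: powR_ge0.
have pow_mono (x y : R) :
    0 <= x -> x <= y -> x `^ (2 * s + 1) <= y `^ (2 * s + 1).
  by move=> x0 xy; apply: ge0_ler_powR => //; rewrite nnegrE (le_trans x0 xy).
exact: frob_svd_monotone_ge0 pow_ge0 pow_mono oUA oVA oUC oVC hA0 hC0.
Qed.
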